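(* Let $X:I\times J\to\mathbb{R}^4$ be a pencil surface $X(s,t)=\gamma(s)+A(t)V_2(s)+B(t)V_4(s)$ (notation and standing assumptions as in the context). Then the Gaussian curvature of $X$ at $(s,t)$ is $$K=\frac{(a^2+b^2)\,\bigl(A'B''-B'A''\bigr)\,\bigl\{A'\,b\,\kappa_3-B'(\kappa_1 a-\kappa_2 b)\bigr\}-\bigl((A')^2+(B')^2\bigr)\bigl(a\,b_t-b\,a_t\bigr)^2}{E^2G^2},$$ where $E=a^2+b^2$, $G=(A')^2+(B')^2$, and all functions are evaluated at $s$, $t$ or $(s,t)$ as appropriate.
   Context: Let $I,J\subset\mathbb{R}$ be open intervals and $\gamma:I\to\mathbb{R}^4$ a smooth unit-speed curve equipped with a smooth orthonormal frame $(V_1,V_2,V_3,V_4)$ along $\gamma$ and smooth functions $\kappa_1,\kappa_2,\kappa_3:I\to\mathbb{R}$ satisfying the Frenet equations $\gamma'=V_1$, $V_1'=\kappa_1V_2$, $V_2'=-\kappa_1V_1+\kappa_2V_3$, $V_3'=-\kappa_2V_2+\kappa_3V_4$, $V_4'=-\kappa_3V_3$. Let $A,B:J\to\mathbb{R}$ be smooth (''marching-scale functions'') and define the pencil surface $X(s,t)=\gamma(s)+A(t)V_2(s)+B(t)V_4(s)$. Put $a(s,t)=1-\kappa_1(s)A(t)$ and $b(s,t)=\kappa_2(s)A(t)-\kappa_3(s)B(t)$, and assume $a^2+b^2>0$ on $I\times J$ and $A'(t)^2+B'(t)^2>0$ on $J$ (so $X$ is an immersion). Primes on $A,B$ denote $d/dt$;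 subscripts $s,t$ denote partial derivatives. $K$ is the Gaussian curvature of the induced metric. *)

From Stdlib Require Import Reals Lra ClassicalEpsilon.
Open Scope R_scope.

(* The derivative of f at x: the unique l with derivable_pt_lim f x l when
   f is differentiable at x (junk value otherwise). *)
Definition Deriv (f : R -> R) (x : R) : R :=
  epsilon (inhabits 0) (fun l => derivable_pt_lim f x l).

Definition Ds (f : R -> R -> R) (s t : R) : R := Deriv (fun u => f u t) s.
Definition Dt (f : R -> R -> R) (s t : R) : R := Deriv (fun v => f s v) t.

Definition is_open_interval (I : R -> Prop) : Prop :=
  (exists x, I x) /\
  (forall x y z, I x -> I z -> x <= y <= z -> I y) /\
  (forall x, I x -> exists e, 0 < e /\ forall y, Rabs (y - x) < e -> I y).

Definition smooth_on (I : R -> Prop) (f : R -> R) : Prop :=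
  forall (n : nat) (x : R), I x ->
    exists l, derivable_pt_lim (Nat.iter n Deriv f) x l.

Record V4 : Type := mkV4 { c1 : R; c2 : R; c3 : R; c4 : R }.

Definition vadd (u v : V4) : V4 :=
  mkV4 (c1 u + c1 v) (c2 u + c2 v) (c3 u + c3 v) (c4 u + c4 v).
Definition vscale (r : R) (v : V4) : V4 :=
  mkV4 (r * c1 v) (r * c2 v) (r * c3 v) (r * c4 v).
Definition vdot (u v : V4) : R :=
  c1 u * c1 v + c2 u * c2 v + c3 u * c3 v + c4 u * c4 v.

Definition vderiv_lim (c : R -> V4) (x : R) (v : V4) : Prop :=
  derivable_pt_lim (fun u => c1 (c u)) x (c1 v) /\
  derivable_pt_lim (fun u => c2 (c u)) x (c2 v) /\
  derivable_pt_lim (fun u => c3 (c u)) x (c3 v) /\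
  derivable_pt_lim (fun u => c4 (c u)) x (c4 v).

Definition vsmooth_on (I : R -> Prop) (c : R -> V4) : Prop :=
  smooth_on I (fun u => c1 (c u)) /\ smooth_on I (fun u => c2 (c u)) /\
  smooth_on I (fun u => c3 (c u)) /\ smooth_on I (fun u => c4 (c u)).

Definition Xs (X : R -> R -> V4) (s t : R) : V4 :=
  mkV4 (Ds (fun u v => c1 (X u v)) s t) (Ds (fun u v => c2 (X u v)) s t)
       (Ds (fun u v => c3 (X u v)) s t) (Ds (fun u v => c4 (X u v)) s t).
Definition Xt (X : R -> R -> V4) (s t : R) : V4 :=
  mkV4 (Dt (fun u v => c1 (X u v)) s t) (Dt (fun u v => c2 (X u v)) s t)
       (Dt (fun u v => c3 (X u v)) s t) (Dt (fun u v => c4 (X u v)) s t).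

Definition metricE (X : R -> R -> V4) (s t : R) : R := vdot (Xs X s t) (Xs X s t).
Definition metricF (X : R -> R -> V4) (s t : R) : R := vdot (Xs X s t) (Xt X s t).
Definition metricG (X : R -> R -> V4) (s t : R) : R := vdot (Xt X s t) (Xt X s t).

Definition det3 (a11 a12 a13 a21 a22 a23 a31 a32 a33 : R) : R :=
  a11 * (a22 * a33 - a23 * a32)
  - a12 * (a21 * a33 - a23 * a31)
  + a13 * (a21 * a32 - a22 * a31).

(* Gaussian curvature of the metric E ds^2 + 2F ds dt + G dt^2 at (s,t),
   given by the Brioschi formula (it depends only on E, F, G). *)
Definition gauss_curv_metric (E F G : R -> R -> R) (s t : R) : R :=
  let e := E s t in let f := F s t in let g := G s t in
  let Es := Ds E s t in let Et := Dt E s t in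
  let Fs := Ds F s t in let Ft := Dt F s t in
  let Gs := Ds G s t in let Gt := Dt G s t in
  let Ett := Dt (Dt E) s t in let Fst := Dt (Ds F) s t in
  let Gss := Ds (Ds G) s t in
  (det3 (- Ett / 2 + Fst - Gss / 2) (Es / 2) (Fs - Et / 2)
        (Ft - Gs / 2) e f
        (Gt / 2) f g
   - det3 0 (Et / 2) (Gs / 2)
          (Et / 2) e f
          (Gs / 2) f g)
  / (e * g - f ^ 2) ^ 2.

Definition gauss_curv (X : R -> R -> V4) (s t : R) : R :=
  gauss_curv_metric (metricE X) (metricF X) (metricG X) s t.

Definition pencil (gamma V2 V4' : R -> V4) (A B : R -> R) (s t : R) : V4 :=
  vadd (gamma s) (vadd (vscale (A t) (V2 s)) (vscale (B t) (V4' s))).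

From Stdlib Require Import Reals Lra ClassicalEpsilon.
Open Scope R_scope.

(* The Frenet equations give X_s = a V_1 + b V_3 and X_t = A' V_2 + B' V_4,
   so the induced metric is E ds^2 + G dt^2 with E = a^2 + b^2 and
   G = A'^2 + B'^2 independent of s. For such a metric the Brioschi formula
   collapses to
   K = (E_t (E G_t + E_t G) / 4 - E_tt E G / 2) / (E G)^2,
   and substituting a_t = -k1 A', b_t = k2 A' - k3 B' gives the claim. *)

Lemma Deriv_unique f x l : derivable_pt_lim f x l -> Deriv f x = l.
Proof.
  intro Hl; unfold Deriv.
  apply (uniqueness_limite f x); [|exact Hl].
  apply (epsilon_spec (inhabits 0) (fun l => derivable_pt_lim f x l)).
  now exists l.
Qed.

Lemma Deriv_ext_on I f g x l :
  is_open_interval I -> I x -> (forall y, I y -> f y = g y) ->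
  derivable_pt_lim g x l -> Deriv f x = l.
Proof.
  intros (_ & _ & HIopen) Hx Hfg Hg; apply Deriv_unique.
  destruct (HIopen x Hx) as (e & He & Hball).
  apply (derivable_pt_lim_locally_ext g f x (x - e) (x + e)); [lra | | exact Hg].
  intros z Hz; symmetry; apply Hfg, Hball, Rabs_def1; lra.
Qed.

Lemma smooth_on_derivable I f n x :
  smooth_on I f -> I x ->
  derivable_pt_lim (Nat.iter n Deriv f) x (Deriv (Nat.iter n Deriv f) x).
Proof.
  intros Hf Hx; destruct (Hf n x Hx) as [l Hl].
  now rewrite (Deriv_unique _ _ _ Hl).
Qed.

(* The Stdlib rules restated on lambda terms, so that [apply] finds the
   decomposition of the function by first-order unification. *)
Lemma dpl_const c x : derivable_pt_lim (fun _ => c) x 0.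
Proof. apply derivable_pt_lim_const. Qed.
Lemma dpl_plus f g x lf lg : derivable_pt_lim f x lf -> derivable_pt_lim g x lg ->
  derivable_pt_lim (fun y => f y + g y) x (lf + lg).
Proof. apply derivable_pt_lim_plus. Qed.
Lemma dpl_minus f g x lf lg : derivable_pt_lim f x lf -> derivable_pt_lim g x lg ->
  derivable_pt_lim (fun y => f y - g y) x (lf - lg).
Proof. apply derivable_pt_lim_minus. Qed.
Lemma dpl_opp f x lf : derivable_pt_lim f x lf ->
  derivable_pt_lim (fun y => - f y) x (- lf).
Proof. apply derivable_pt_lim_opp. Qed.
Lemma dpl_mult f g x lf lg : derivable_pt_lim f x lf -> derivable_pt_lim g x lg ->
  derivable_pt_lim (fun y => f y * g y) x (lf * g x + f x * lg).
Proof. apply derivable_pt_lim_mult. Qed.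
Lemma dpl_sqr f x lf : derivable_pt_lim f x lf ->
  derivable_pt_lim (fun y => f y ^ 2) x (2 * f x * lf).
Proof.
  intro Hf.
  apply (derivable_pt_lim_ext (fun y => f y * f y)); [intro; ring |].
  replace (2 * f x * lf) with (lf * f x + f x * lf) by ring.
  now apply dpl_mult.
Qed.

Lemma Ds_indep_on (I J : R -> Prop) f h :
  is_open_interval I -> (forall u v, I u -> J v -> f u v = h v) ->
  forall u v, I u -> J v -> Ds f u v = 0.
Proof.
  intros HI Hf u v Hu Hv; unfold Ds.
  apply (Deriv_ext_on I _ (fun _ => h v)); [exact HI | exact Hu | | apply dpl_const].
  intros y Hy; exact (Hf y v Hy Hv).
Qed.

Lemma Dt_indep_on (I J : R -> Prop) f h :
  is_open_interval J -> (forall u v, I u -> J v -> f u v = h u) ->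
  forall u v, I u -> J v -> Dt f u v = 0.
Proof.
  intros HJ Hf u v Hu Hv; unfold Dt.
  apply (Deriv_ext_on J _ (fun _ => h u)); [exact HJ | exact Hv | | apply dpl_const].
  intros y Hy; exact (Hf u y Hu Hy).
Qed.

Ltac derive_value :=
  match goal with |- derivable_pt_lim _ _ ?l =>
    let l' := fresh in evar (l' : R); replace l with l';
    [ repeat first [ apply dpl_const | apply dpl_plus | apply dpl_minus
                   | apply dpl_opp | apply dpl_sqr | apply dpl_mult | eassumption ]
    | subst l'; cbv beta; ring ]
  end.

Lemma vdot_comm u v : vdot u v = vdot v u.
Proof. destruct u, v; unfold vdot; simpl; ring. Qed.

Lemma vdot_comb x y c d u v w z :
  vdot (vadd (vscale x u) (vscale y v)) (vadd (vscale c w) (vscale d z)) =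
  x * c * vdot u w + x * d * vdot u z + y * c * vdot v w + y * d * vdot v z.
Proof. destruct u, v, w, z; unfold vdot, vadd, vscale; simpl; ring. Qed.

Lemma vdot_comb_orthonormal x y c d u v :
  vdot u u = 1 -> vdot v v = 1 -> vdot u v = 0 ->
  vdot (vadd (vscale x u) (vscale y v)) (vadd (vscale c u) (vscale d v)) =
  x * c + y * d.
Proof.
  intros Hu Hv Huv; rewrite vdot_comb, (vdot_comm v u), Hu, Hv, Huv; ring.
Qed.

Lemma vdot_comb_orthogonal x y c d u v w z :
  vdot u w = 0 -> vdot u z = 0 -> vdot v w = 0 -> vdot v z = 0 ->
  vdot (vadd (vscale x u) (vscale y v)) (vadd (vscale c w) (vscale d z)) = 0.
Proof. intros Huw Huz Hvw Hvz; rewrite vdot_comb, Huw, Huz, Hvw, Hvz; ring. Qed.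

Lemma gauss_curv_metric_orthogonal E F G s t :
  F s t = 0 -> Ds F s t = 0 -> Dt F s t = 0 -> Dt (Ds F) s t = 0 ->
  Ds G s t = 0 -> Ds (Ds G) s t = 0 ->
  gauss_curv_metric E F G s t =
  (Dt E s t * (E s t * Dt G s t + Dt E s t * G s t) / 4
   - Dt (Dt E) s t * E s t * G s t / 2) / (E s t * G s t) ^ 2.
Proof.
  intros HF HFs HFt HFst HGs HGss.
  unfold gauss_curv_metric; cbv zeta.
  rewrite HF, HFs, HFt, HFst, HGs, HGss; unfold det3, Rdiv.
  replace (E s t * G s t - 0 ^ 2) with (E s t * G s t) by ring.
  f_equal; field.
Qed.

Section PencilSurface.

Context {I J : R -> Prop} {gamma V1 V2 V3 V4' : R -> V4} {k1 k2 k3 A B : R -> R}.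
Hypotheses (HJ : is_open_interval J) (HA : smooth_on J A) (HB : smooth_on J B).
Hypothesis Horth : forall s, I s ->
  vdot (V1 s) (V1 s) = 1 /\ vdot (V2 s) (V2 s) = 1 /\
  vdot (V3 s) (V3 s) = 1 /\ vdot (V4' s) (V4' s) = 1 /\
  vdot (V1 s) (V2 s) = 0 /\ vdot (V1 s) (V3 s) = 0 /\
  vdot (V1 s) (V4' s) = 0 /\ vdot (V2 s) (V3 s) = 0 /\
  vdot (V2 s) (V4' s) = 0 /\ vdot (V3 s) (V4' s) = 0.
Hypothesis Hfrenet : forall s, I s ->
  vderiv_lim gamma s (V1 s) /\
  vderiv_lim V1 s (vscale (k1 s) (V2 s)) /\
  vderiv_lim V2 s (vadd (vscale (- k1 s) (V1 s)) (vscale (k2 s) (V3 s))) /\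
  vderiv_lim V3 s (vadd (vscale (- k2 s) (V2 s)) (vscale (k3 s) (V4' s))) /\
  vderiv_lim V4' s (vscale (- k3 s) (V3 s)).

Let X := pencil gamma V2 V4' A B.

Lemma derivable_A v : J v -> derivable_pt_lim A v (Deriv A v).
Proof. exact (smooth_on_derivable J A 0 v HA). Qed.
Lemma derivable_B v : J v -> derivable_pt_lim B v (Deriv B v).
Proof. exact (smooth_on_derivable J B 0 v HB). Qed.
Lemma derivable_DA v : J v -> derivable_pt_lim (Deriv A) v (Deriv (Deriv A) v).
Proof. exact (smooth_on_derivable J A 1 v HA). Qed.
Lemma derivable_DB v : J v -> derivable_pt_lim (Deriv B) v (Deriv (Deriv B) v).
Proof. exact (smooth_on_derivable J B 1 v HB). Qed.

Lemma pencil_Xs u v : I u ->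
  Xs X u v = vadd (vscale (1 - k1 u * A v) (V1 u))
                  (vscale (k2 u * A v - k3 u * B v) (V3 u)).
Proof.
  intro Hu; destruct (Hfrenet u Hu) as (Hg & _ & H2 & _ & H4).
  destruct Hg as (g1 & g2 & g3 & g4), H2 as (p1 & p2 & p3 & p4),
    H4 as (q1 & q2 & q3 & q4); simpl in *.
  unfold Xs, Ds, X, pencil, vadd, vscale; simpl.
  f_equal; apply Deriv_unique; derive_value.
Qed.

Lemma pencil_Xt u v : J v ->
  Xt X u v = vadd (vscale (Deriv A v) (V2 u)) (vscale (Deriv B v) (V4' u)).
Proof.
  intro Hv; pose proof (derivable_A v Hv); pose proof (derivable_B v Hv).
  unfold Xt, Dt, X, pencil, vadd, vscale; simpl.
  f_equal; apply Deriv_unique; derive_value.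
Qed.

Lemma pencil_metricE u v : I u ->
  metricE X u v = (1 - k1 u * A v) ^ 2 + (k2 u * A v - k3 u * B v) ^ 2.
Proof.
  intro Hu; destruct (Horth u Hu) as (o1 & _ & o3 & _ & _ & o13 & _).
  unfold metricE; rewrite pencil_Xs, vdot_comb_orthonormal by assumption; ring.
Qed.

Lemma pencil_metricF u v : I u -> J v -> metricF X u v = 0.
Proof.
  intros Hu Hv; destruct (Horth u Hu) as (_ & _ & _ & _ & o12 & _ & o14 & o23 & _ & o34).
  unfold metricF; rewrite pencil_Xs, pencil_Xt by assumption.
  apply vdot_comb_orthogonal; [| | rewrite vdot_comm |]; assumption.
Qed.

Lemma pencil_metricG u v : I u -> J v ->
  metricG X u v = Deriv A v ^ 2 + Deriv B v ^ 2.
Proof.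
  intros Hu Hv; destruct (Horth u Hu) as (_ & o2 & _ & o4 & _ & _ & _ & _ & o24 & _).
  unfold metricG; rewrite pencil_Xt, vdot_comb_orthonormal by assumption; ring.
Qed.

Lemma pencil_Dt_a u v : J v -> Dt (fun u v => 1 - k1 u * A v) u v = - k1 u * Deriv A v.
Proof.
  intro Hv; pose proof (derivable_A v Hv).
  unfold Dt; apply Deriv_unique; derive_value.
Qed.

Lemma pencil_Dt_b u v : J v ->
  Dt (fun u v => k2 u * A v - k3 u * B v) u v = k2 u * Deriv A v - k3 u * Deriv B v.
Proof.
  intro Hv; pose proof (derivable_A v Hv); pose proof (derivable_B v Hv).
  unfold Dt; apply Deriv_unique; derive_value.
Qed.

Lemma pencil_Dt_metricE u v : I u -> J v ->
  Dt (metricE X) u v =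
  2 * ((1 - k1 u * A v) * (- k1 u * Deriv A v)
       + (k2 u * A v - k3 u * B v) * (k2 u * Deriv A v - k3 u * Deriv B v)).
Proof.
  intros Hu Hv; pose proof (derivable_A v Hv); pose proof (derivable_B v Hv).
  unfold Dt; apply (Deriv_ext_on J _
    (fun y => (1 - k1 u * A y) ^ 2 + (k2 u * A y - k3 u * B y) ^ 2)); auto.
  - intros y _; now apply pencil_metricE.
  - derive_value.
Qed.

Lemma pencil_Dt_Dt_metricE u v : I u -> J v ->
  Dt (Dt (metricE X)) u v =
  2 * ((- k1 u * Deriv A v) ^ 2 + (1 - k1 u * A v) * (- k1 u * Deriv (Deriv A) v)
       + (k2 u * Deriv A v - k3 u * Deriv B v) ^ 2
       + (k2 u * A v - k3 u * B v)
         * (k2 u * Deriv (Deriv A) v - k3 u * Deriv (Deriv B) v)).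
Proof.
  intros Hu Hv; pose proof (derivable_A v Hv); pose proof (derivable_B v Hv).
  pose proof (derivable_DA v Hv); pose proof (derivable_DB v Hv).
  unfold Dt at 1; apply (Deriv_ext_on J _
    (fun y => 2 * ((1 - k1 u * A y) * (- k1 u * Deriv A y)
       + (k2 u * A y - k3 u * B y) * (k2 u * Deriv A y - k3 u * Deriv B y)))); auto.
  - intros y Hy; now apply pencil_Dt_metricE.
  - derive_value.
Qed.

Lemma pencil_Dt_metricG u v : I u -> J v ->
  Dt (metricG X) u v = 2 * Deriv A v * Deriv (Deriv A) v + 2 * Deriv B v * Deriv (Deriv B) v.
Proof.
  intros Hu Hv; pose proof (derivable_DA v Hv); pose proof (derivable_DB v Hv).
  unfold Dt; apply (Deriv_ext_on J _ (fun y => Deriv A y ^ 2 + Deriv B y ^ 2)); auto.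
  - intros y Hy; now apply pencil_metricG.
  - derive_value.
Qed.

End PencilSurface.

(* Only A and B need to be smooth: the s-derivatives of gamma and of the frame
   are supplied by the Frenet equations, and no s-derivative of the
   curvatures enters K. *)
Theorem proposition1
  (I J : R -> Prop) (gamma V1 V2 V3 V4' : R -> V4)
  (k1 k2 k3 A B : R -> R)
  (HI : is_open_interval I) (HJ : is_open_interval J)
  (Hsg : vsmooth_on I gamma)
  (Hs1 : vsmooth_on I V1) (Hs2 : vsmooth_on I V2)
  (Hs3 : vsmooth_on I V3) (Hs4 : vsmooth_on I V4')
  (Hk1 : smooth_on I k1) (Hk2 : smooth_on I k2) (Hk3 : smooth_on I k3)
  (HA : smooth_on J A) (HB : smooth_on J B)
  (Horth : forall s, I s ->
     vdot (V1 s) (V1 s) = 1 /\ vdot (V2 s) (V2 s) = 1 /\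
     vdot (V3 s) (V3 s) = 1 /\ vdot (V4' s) (V4' s) = 1 /\
     vdot (V1 s) (V2 s) = 0 /\ vdot (V1 s) (V3 s) = 0 /\
     vdot (V1 s) (V4' s) = 0 /\ vdot (V2 s) (V3 s) = 0 /\
     vdot (V2 s) (V4' s) = 0 /\ vdot (V3 s) (V4' s) = 0)
  (Hfrenet : forall s, I s ->
     vderiv_lim gamma s (V1 s) /\
     vderiv_lim V1 s (vscale (k1 s) (V2 s)) /\
     vderiv_lim V2 s (vadd (vscale (- k1 s) (V1 s)) (vscale (k2 s) (V3 s))) /\
     vderiv_lim V3 s (vadd (vscale (- k2 s) (V2 s)) (vscale (k3 s) (V4' s))) /\
     vderiv_lim V4' s (vscale (- k3 s) (V3 s)))
  (Hab : forall s t, I s -> J t ->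
     (1 - k1 s * A t) ^ 2 + (k2 s * A t - k3 s * B t) ^ 2 > 0)
  (HAB : forall t, J t -> Deriv A t ^ 2 + Deriv B t ^ 2 > 0) :
  let a := fun s t => 1 - k1 s * A t in
  let b := fun s t => k2 s * A t - k3 s * B t in
  forall s t, I s -> J t ->
    let A1 := Deriv A t in let A2 := Deriv (Deriv A) t in
    let B1 := Deriv B t in let B2 := Deriv (Deriv B) t in
    let E := a s t ^ 2 + b s t ^ 2 in
    let G := A1 ^ 2 + B1 ^ 2 in
    gauss_curv (pencil gamma V2 V4' A B) s t =
      (E * (A1 * B2 - B1 * A2)
         * (A1 * b s t * k3 s - B1 * (k1 s * a s t - k2 s * b s t))
       - G * (a s t * Dt b s t - b s t * Dt a s t) ^ 2)
      / (E ^ 2 * G ^ 2).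
Proof.
  intros a b s t Hs Ht A1 A2 B1 B2 E G.
  pose proof (pencil_metricF HA HB Horth Hfrenet) as HF.
  pose proof (pencil_metricG (gamma := gamma) HA HB Horth) as HG.
  pose proof (Ds_indep_on I J _ (fun _ => 0) HI HF) as HFs.
  pose proof (Dt_indep_on I J _ (fun _ => 0) HJ HF) as HFt.
  pose proof (Dt_indep_on I J _ (fun _ => 0) HJ HFs) as HFst.
  pose proof (Ds_indep_on I J _ _ HI HG) as HGs.
  pose proof (Ds_indep_on I J _ (fun _ => 0) HI HGs) as HGss.
  unfold gauss_curv; rewrite gauss_curv_metric_orthogonal by auto.
  rewrite (pencil_metricE Horth Hfrenet), (pencil_Dt_metricE HJ HA HB Horth Hfrenet),
    (pencil_Dt_Dt_metricE HJ HA HB Horth Hfrenet), HG, (pencil_Dt_metricG HJ HA HB Horth)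
    by assumption.
  subst a b; rewrite (pencil_Dt_a HA), (pencil_Dt_b HA HB) by assumption.
  pose proof (Hab s t Hs Ht); pose proof (HAB t Ht).
  unfold E, G, A1, A2, B1, B2; field; split; lra.
Qed.
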